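(* There exists a PBD$(124,\{3,4\})$ of dimension three.
   Context: For a positive integer $v$ and $K \subseteq \{2,3,4,\dots\}$, a pairwise balanced design PBD$(v,K)$ is a pair $(X,\mathcal{B})$ where $X$ is a $v$-set of points and $\mathcal{B}$ is a family of subsets of $X$ (blocks), each of size in $K$, such that any two distinct points of $X$ lie together in exactly one block. A flat (subdesign) is a pair $(Y,\mathcal{B}_Y)$ with $Y \subseteq X$ and $\mathcal{B}_Y = \{B \in \mathcal{B} : B \subseteq Y\}$ such that any two distinct points of $Y$ lie together in exactly one block of $\mathcal{B}_Y$; it is proper if $Y \ne X$. The dimension of the PBD is the maximum integer $d$ such that every set of $d$ points is contained in a proper flat. *)

From mathcomp Require Import all_boot.
Set Implicit Arguments. Unset Strict Implicit. Unset Printing Implicit Defensive.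

(* A design on the point set 'I_v (the v-set X) with block family
   [blocks : {set {set 'I_v}}]; K is given as a predicate on nat. *)

Definition is_PBD (v : nat) (K : pred nat) (blocks : {set {set 'I_v}}) : Prop :=
  (forall B, B \in blocks -> #|B| \in K) /\
  (forall x y : 'I_v, x != y ->
     #|[set B in blocks | (x \in B) && (y \in B)]| = 1).

Definition is_flat (v : nat) (blocks : {set {set 'I_v}}) (Y : {set 'I_v}) : Prop :=
  forall x y : 'I_v, x \in Y -> y \in Y -> x != y ->
    #|[set B in blocks | [&& B \subset Y, x \in B & y \in B]]| = 1.

Definition is_proper_flat (v : nat) (blocks : {set {set 'I_v}}) (Y : {set 'I_v}) : Prop :=
  is_flat blocks Y /\ Y != [set: 'I_v].

Definition all_sets_in_proper_flat (v : nat) (blocks : {set {set 'I_v}}) (d : nat) : Prop :=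
  forall S : {set 'I_v}, #|S| = d ->
    exists Y : {set 'I_v}, is_proper_flat blocks Y /\ S \subset Y.

(* Sets of d points exist only for d <= v, so the
   maximum is taken over d <= v (for d > v the condition is vacuous). *)
Definition has_dimension (v : nat) (blocks : {set {set 'I_v}}) (d : nat) : Prop :=
  d <= v /\ all_sets_in_proper_flat blocks d /\
  (forall d', d' <= v -> all_sets_in_proper_flat blocks d' -> d' <= d).

From mathcomp Require Import all_boot.
Set Implicit Arguments. Unset Strict Implicit. Unset Printing Implicit Defensive.

(* The points are 8 * i + x (class i < 15, x in Z_8) and the four
   points at infinity 120..123, which form class 15.  The classes i < 15 are
   the points of PG(3,2), class i being the nonzero vector i + 1 of F_2^4.
   The blocks are: the block of the four points at infinity; on each class
   together with infinity, a fixed PBD on 12 points with a hole of size 4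
   (infinity_blocks); for each line {a, b, c} of PG(3,2), the 64 triples
   {(a, x), (b, y), (c, x + y)} of the cyclic transversal design TD(3, 8).

   For each plane of PG(3,2), the points whose class lies
   in the plane or is infinite form a proper flat; any three classes lie in a
   plane, so any three points lie in a proper flat.  In a PBD the flats are
   exactly the sets containing every block that meets them in two points;
   four rounds of this closure starting from the points 0, 9, 24, 56 reach
   every point, so this 4-set lies in no proper flat and the dimension is 3. *)

Lemma extend_to_card (T : finType) (A : {set T}) (n : nat) :
  #|A| <= n <= #|T| -> exists2 S : {set T}, A \subset S & #|S| = n.
Proof.
case/andP=> leAn; rewrite -(subnK leAn); elim: (n - #|A|) => [|k IHk] ltkT.
  by exists A.
have [S sAS cardS] := IHk (ltnW ltkT).
have /subsetPn [x _ xS] : ~~ ([set: T] \subset S).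
  apply: contraTN ltkT => /subset_leq_card; rewrite cardsT cardS => leTS.
  by rewrite -ltnNge addSn ltnS.
by exists (x |: S); [apply: subset_trans sAS (subsetUr _ _) | rewrite cardsU1 xS cardS].
Qed.

Lemma dimension_lt_spanning (v : nat) (blocks : {set {set 'I_v}}) (G : {set 'I_v}) (d : nat) :
  (forall Y, is_flat blocks Y -> G \subset Y -> Y = [set: 'I_v]) ->
  d <= v -> all_sets_in_proper_flat blocks d -> d < #|G|.
Proof.
move=> spanG ledv allS; rewrite ltnNge; apply/negP => leGd.
have [S sGS cardS] : exists2 S : {set 'I_v}, G \subset S & #|S| = d.
  by apply: extend_to_card; rewrite leGd card_ord.
have [Y [[flatY properY] sSY]] := allS S cardS.
by move/eqP: properY; apply; apply: spanG (subset_trans sGS sSY).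
Qed.

Lemma has_dimensionP (v : nat) (blocks : {set {set 'I_v}}) (G : {set 'I_v}) (d : nat) :
  d <= v -> all_sets_in_proper_flat blocks d ->
  (forall Y, is_flat blocks Y -> G \subset Y -> Y = [set: 'I_v]) -> #|G| = d.+1 ->
  has_dimension blocks d.
Proof.
move=> ledv allS spanG cardG; split=> //; split=> // d' led'v allS'.
by rewrite -ltnS -cardG; apply: dimension_lt_spanning spanG led'v allS'.
Qed.

Section LinearSpace.
Variables (v : nat) (K : pred nat) (blocks : {set {set 'I_v}}).
Hypothesis pbd : is_PBD K blocks.

Definition closed_set (Y : {set 'I_v}) : Prop :=
  forall B, B \in blocks -> 1 < #|B :&: Y| -> B \subset Y.

Lemma block_unique (x y : 'I_v) (B B' : {set 'I_v}) : x != y ->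
  B \in blocks -> x \in B -> y \in B -> B' \in blocks -> x \in B' -> y \in B' -> B = B'.
Proof.
move=> neqxy Bb xB yB B'b xB' yB'; have /eqP/cards1P [B0 defB0] := pbd.2 x y neqxy.
have: B \in [set B in blocks | (x \in B) && (y \in B)] by rewrite inE Bb xB yB.
have: B' \in [set B in blocks | (x \in B) && (y \in B)] by rewrite inE B'b xB' yB'.
by rewrite defB0 !inE => /eqP -> /eqP ->.
Qed.

Lemma flat_closedP (Y : {set 'I_v}) : is_flat blocks Y <-> closed_set Y.
Proof.
split=> [flatY B Bb | closedY x y xY yY neqxy].
  case/card_gt1P=> x [y] [/setIP [xB xY] /setIP [yB yY] neqxy].
  have /eqP/cards1P [B0 defB0] := flatY x y xY yY neqxy.
  have: B0 \in [set B in blocks | [&& B \subset Y, x \in B & y \in B]] by rewrite defB0 set11.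
  rewrite inE => /andP [B0b /and3P [sB0Y xB0 yB0]].
  by rewrite (block_unique neqxy Bb xB yB B0b xB0 yB0).
rewrite -(pbd.2 x y neqxy); apply: eq_card => B; rewrite !inE.
case Bb: (B \in blocks) => //=; case xB: (x \in B); case yB: (y \in B); rewrite ?andbF //=.
by rewrite andbT closedY //; apply/card_gt1P; exists x, y; rewrite !inE xB yB xY yY.
Qed.

End LinearSpace.

Section ListDesign.
Variables (v : nat) (bl : seq (seq nat)).

Definition pts (l : seq nat) : {set 'I_v} := [set x : 'I_v | val x \in l].
Definition list_blocks : {set {set 'I_v}} := [set B | B \in map pts bl].

Definition well_formed (l : seq nat) : bool := uniq l && all (fun p => p < v) l.

Lemma card_pts (l : seq nat) : well_formed l -> #|pts l| = size l.
Proof.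
case/andP=> uniq_l lt_l.
have -> : pts l = [set x in pmap insub l] by apply/setP => x; rewrite !inE mem_pmap_sub.
rewrite cardsE (card_uniqP _) ?pmap_sub_uniq // size_pmap_sub.
by apply/eqP; rewrite -all_count.
Qed.

Lemma card_pts_meet (l : seq nat) (p : pred nat) : well_formed l ->
  #|pts l :&: [set x : 'I_v | p (val x)]| = count p l.
Proof.
case/andP=> uniq_l lt_l; rewrite -size_filter -card_pts.
  by apply: eq_card => x; rewrite !inE mem_filter andbC.
rewrite /well_formed filter_uniq //=; apply/allP => p'.
by rewrite mem_filter => /andP [_ /(allP lt_l)].
Qed.

Lemma ord_in_iota (x : 'I_v) : val x \in iota 0 v.
Proof. by rewrite mem_iota ltn_ord. Qed.

Hypothesis wf_bl : all well_formed bl.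

Lemma list_blocksP (B : {set 'I_v}) :
  reflect (exists2 l, l \in bl & B = pts l) (B \in list_blocks).
Proof. by rewrite inE; apply: (iffP mapP). Qed.

Definition co_points (x : nat) : seq nat :=
  flatten [seq filter (predC1 x) l | l <- bl & x \in l].

Lemma count_co_points (x y : nat) : x != y ->
  count_mem y (co_points x) = count (fun l => (x \in l) && (y \in l)) bl.
Proof.
move=> neqxy; rewrite /co_points; move: wf_bl; elim: bl => //= l s IHs /andP [/andP [uniq_l _] wf_s].
case: (x \in l) => /=; last exact: IHs.
rewrite count_cat IHs // count_uniq_mem ?filter_uniq // mem_filter /=.
by case: eqP => [eqyx | //]; rewrite -eqyx eqxx in neqxy.
Qed.

Lemma card_blocks_through (x y : 'I_v) :
  count (fun l => (val x \in l) && (val y \in l)) bl = 1 ->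
  #|[set B in list_blocks | (x \in B) && (y \in B)]| = 1.
Proof.
move=> count1; apply/eqP; rewrite eqn_leq; apply/andP; split.
  have -> : 1 = size (filter (fun B : {set 'I_v} => (x \in B) && (y \in B)) (map pts bl)).
    by rewrite -count1 size_filter count_map; apply: eq_count => l; rewrite /= !inE.
  apply: leq_trans (card_size _); apply: subset_leq_card.
  by apply/subsetP => B; rewrite !inE mem_filter andbC.
have /hasP [l bl_l /andP [xl yl]] : has (fun l => (val x \in l) && (val y \in l)) bl.
  by rewrite has_count count1.
by apply/card_gt0P; exists (pts l); rewrite !inE map_f //=; apply/andP.
Qed.

Lemma list_blocks_PBD (K : pred nat) :
  all (fun l => size l \in K) bl ->
  all (fun x => perm_eq (co_points x) (filter (predC1 x) (iota 0 v))) (iota 0 v) ->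
  is_PBD K list_blocks.
Proof.
move=> sizes_bl co_bl; split=> [B /list_blocksP [l bl_l ->] | x y neqxy].
  by rewrite card_pts ?(allP wf_bl) ?(allP sizes_bl).
apply: card_blocks_through; rewrite -count_co_points //.
have /permP -> := allP co_bl _ (ord_in_iota x).
by rewrite count_uniq_mem ?filter_uniq ?iota_uniq // mem_filter /= eq_sym neqxy ord_in_iota.
Qed.

Lemma list_closed (p : pred nat) :
  all (fun l => (1 < count p l) ==> all p l) bl ->
  closed_set list_blocks [set x : 'I_v | p (val x)].
Proof.
move=> closed_bl B /list_blocksP [l bl_l ->]; rewrite card_pts_meet ?(allP wf_bl) // => meet2.
apply/subsetP => x; rewrite !inE => xl.
exact: allP (implyP (allP closed_bl l bl_l) meet2) _ xl.
Qed.

Definition grow (c : seq nat) : seq nat :=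
  c ++ flatten [seq l <- bl | 1 < count (mem c) l].

Lemma grow_subset (Y : {set 'I_v}) (c : seq nat) :
  closed_set list_blocks Y -> pts c \subset Y -> pts (grow c) \subset Y.
Proof.
move=> closedY scY; apply/subsetP => x; rewrite inE mem_cat => /orP [xc | ].
  by apply: (subsetP scY); rewrite inE.
case/flattenP => l; rewrite mem_filter => /andP [meet2 bl_l] xl.
suff: pts l \subset Y by move/subsetP; apply; rewrite inE.
apply: closedY; first by rewrite inE map_f.
apply: leq_trans (subset_leq_card (setIS _ scY)).
by rewrite card_pts_meet ?(allP wf_bl).
Qed.

Lemma iter_grow_subset (Y : {set 'I_v}) (c : seq nat) (n : nat) :
  closed_set list_blocks Y -> pts c \subset Y -> pts (iter n grow c) \subset Y.
Proof. by move=> closedY scY; elim: n => //= n; apply: grow_subset. Qed.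

Lemma spanning_list (K : pred nat) (c : seq nat) (n : nat) :
  is_PBD K list_blocks -> all (mem (iter n grow c)) (iota 0 v) ->
  forall Y, is_flat list_blocks Y -> pts c \subset Y -> Y = [set: 'I_v].
Proof.
move=> pbd span_c Y /(flat_closedP pbd) closedY scY; apply/eqP; rewrite eqEsubset subsetT /=.
apply: subset_trans (iter_grow_subset n closedY scY); apply/subsetP => x _.
by rewrite inE; apply: (allP span_c); apply: ord_in_iota.
Qed.

End ListDesign.

(* A PBD on the 8 points of Z_8 together with the points at infinity
   120..123, covering every pair except those inside the hole {120,..,123}:
   each point at infinity completes a partition of Z_8 into blocks of sizes
   2, 3, 3, and these four partitions cover every pair of Z_8 once. *)
Definition infinity_blocks : seq (seq nat) :=
  [:: [:: 0; 1; 120]; [:: 2; 4; 6; 120]; [:: 3; 5; 7; 120];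
      [:: 0; 4; 7; 121]; [:: 1; 5; 6; 121]; [:: 2; 3; 121];
      [:: 0; 3; 6; 122]; [:: 1; 2; 7; 122]; [:: 4; 5; 122];
      [:: 0; 2; 5; 123]; [:: 1; 3; 4; 123]; [:: 6; 7; 123]].

(* The third point on the line of PG(3,2) through the classes a and b. *)
Definition third (a b : nat) : nat := (Nat.lxor a.+1 b.+1).-1.

(* The 35 lines of PG(3,2), each given by its two smallest classes. *)
Definition lines : seq (nat * nat) :=
  [seq ab <- [seq (a, b) | a <- iota 0 15, b <- iota 0 15] | ab.1 < ab.2 < third ab.1 ab.2].

Definition design_list : seq (seq nat) :=
  [:: [:: 120; 121; 122; 123]]
  ++ [seq [seq if p < 8 then 8 * i + p else p | p <- b] | i <- iota 0 15, b <- infinity_blocks]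
  ++ [seq [:: 8 * ab.1 + xy.1; 8 * ab.2 + xy.2; 8 * third ab.1 ab.2 + (xy.1 + xy.2) %% 8]
       | ab <- lines, xy <- [seq (x, y) | x <- iota 0 8, y <- iota 0 8]].

Definition design_blocks : {set {set 'I_124}} := list_blocks 124 design_list.

Definition odd_dot (u w : nat) : bool :=
  odd (count (fun i => Nat.testbit u i && Nat.testbit w i) (iota 0 4)).

(* For each plane of PG(3,2) (orthogonal to some h), its classes and class 15. *)
Definition class_flats : seq (seq nat) :=
  [seq 15 :: [seq c <- iota 0 15 | ~~ odd_dot c.+1 h] | h <- iota 1 15].

Definition in_classes (F : seq nat) (p : nat) : bool := p %/ 8 \in F.

Lemma design_wf : all (well_formed 124) design_list.
Proof. by vm_compute. Qed.

Lemma design_sizes : all (fun l => size l \in (fun k => (k == 3) || (k == 4))) design_list.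
Proof. by vm_compute. Qed.

Lemma design_co_points :
  all (fun x => perm_eq (co_points design_list x) (filter (predC1 x) (iota 0 124))) (iota 0 124).
Proof. by vm_compute. Qed.

Lemma class_flats_closed :
  all (fun F => all (fun l => (1 < count (in_classes F) l) ==> all (in_classes F) l) design_list
                && ~~ all (in_classes F) (iota 0 124)) class_flats.
Proof. by vm_compute. Qed.

Lemma class_flats_cover :
  all (fun i => all (fun j => all (fun k =>
    has (fun F => [&& i \in F, j \in F & k \in F]) class_flats) (iota 0 16)) (iota 0 16)) (iota 0 16).
Proof. by vm_compute. Qed.

Lemma design_spanning : all (mem (iter 4 (grow design_list) [:: 0; 9; 24; 56])) (iota 0 124).
Proof. by vm_compute. Qed.

Lemma design_PBD : is_PBD (fun k => (k == 3) || (k == 4)) design_blocks.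
Proof.
by apply: list_blocks_PBD; [exact: design_wf | exact: design_sizes | exact: design_co_points].
Qed.

Lemma class_flat_proper (F : seq nat) : F \in class_flats ->
  is_proper_flat design_blocks [set x : 'I_124 | in_classes F (val x)].
Proof.
move=> flats_F; have /andP [closedF /allPn [p p_lt pF]] := allP class_flats_closed F flats_F.
split; first exact/(flat_closedP design_PBD)/(list_closed design_wf).
have p124 : p < 124 by rewrite mem_iota in p_lt.
by apply/eqP => /setP /(_ (Ordinal p124)); rewrite !inE (negbTE pF).
Qed.

Lemma three_points : all_sets_in_proper_flat design_blocks 3.
Proof.
move=> S; rewrite cardE; case def_S: (enum S) => [|a [|b [|c [|]]]] // _.
have class_lt (x : 'I_124) : val x %/ 8 \in iota 0 16.
  by rewrite mem_iota ltn_divLR // (leq_trans (ltn_ord x)).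
have /hasP [F flats_F /and3P [aF bF cF]] :=
  allP (allP (allP class_flats_cover _ (class_lt a)) _ (class_lt b)) _ (class_lt c).
exists [set x : 'I_124 | in_classes F (val x)]; split; first exact: class_flat_proper.
by apply/subsetP => x; rewrite -mem_enum def_S !inE => /or3P [] /eqP ->.
Qed.

Theorem proposition3p3 :
  exists blocks : {set {set 'I_124}},
    is_PBD (fun k => (k == 3) || (k == 4)) blocks /\ has_dimension blocks 3.
Proof.
exists design_blocks; split; first exact: design_PBD.
apply: (@has_dimensionP _ _ (pts 124 [:: 0; 9; 24; 56])).
- by [].
- exact: three_points.
- exact: (spanning_list design_wf (n := 4) design_PBD design_spanning).
- by rewrite card_pts.
Qed.
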